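(* Under the full-support assumption and with $\eta L<\tfrac12$, for every $t\ge1$, \[ \Theta_t-\Theta_{t+1}\ge C_1\max\{\hat K^{(t+1)},K^{(t+1)}\}^2,\qquad C_1=\frac{1-4\eta^2L^2}{(\sqrt2\,\eta L+2e^{2\eta L})^2}. \]
   Context: $\mathbb{A}$ finite, $\Delta(\mathbb{A})$ the simplex, $\bm P$ skew-symmetric, $L=\max_{a,a'}|P_{a,a'}|$. $\mathbb{M}$: Nash equilibria, i.e. ${\bm\pi}\in\Delta(\mathbb{A})$ with $\max_a(\bm P{\bm\pi})_a\le0$. Full-support assumption: every $a$ has some ${\bm\pi}\in\mathbb{M}$ with $\pi_a>0$. $p({\bm\pi})=\arg\min_{{\bm\pi}'\in\mathbb{M}}D_{\mathrm{KL}}({\bm\pi}'\|{\bm\pi})$ for positive ${\bm\pi}$. OMWU with $\eta>0$: $\hat{\bm\pi}^{(1)}$ positive, ${\bm\pi}^{(0)}=\hat{\bm\pi}^{(1)}$, for $t\ge1$ $\pi^{(t)}_a\propto\hat\pi^{(t)}_a e^{\eta(\bm P{\bm\pi}^{(t-1)})_a}$, $\hat\pi^{(t+1)}_a\propto\hat\pi^{(t)}_a e^{\eta(\bm P{\bm\pi}^{(t)})_a}$ (normalized). ${\bm\pi}^*=p(\hat{\bm\pi}^{(1)})$. $\Theta_t=D_{\mathrm{KL}}({\bm\pi}^*\|\hat{\bm\pi}^{(t)})+4\eta^2L^2D_{\mathrm{KL}}(\hat{\bm\pi}^{(t)}\|{\bm\pi}^{(t-1)})$. $K^{(t)}=\max_a\hat\pi^{(t)}_a|\eta(\bm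 P{\bm\pi}^{(t-1)})_a|$ (so $K^{(t+1)}=\max_a\hat\pi^{(t+1)}_a|\eta(\bm P{\bm\pi}^{(t)})_a|$), $\hat K^{(t+1)}=\max_a\hat\pi^{(t)}_a|\eta(\bm P{\bm\pi}^{(t)})_a|$. *)

From mathcomp Require Import all_boot all_order all_algebra.
From mathcomp Require Import all_classical all_reals all_analysis.
Set Implicit Arguments. Unset Strict Implicit. Unset Printing Implicit Defensive.
Import Order.TTheory GRing.Theory Num.Theory.
Local Open Scope ring_scope.

Section Defs.
Variables (R : realType) (A : finType).

Definition in_simplex (p : A -> R) : Prop :=
  (forall a, 0 <= p a) /\ \sum_a p a = 1.

Definition positive_dist (p : A -> R) : Prop :=
  in_simplex p /\ forall a, 0 < p a.

Definition Pmul (P : A -> A -> R) (p : A -> R) (a : A) : R :=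
  \sum_b P a b * p b.

Definition skew_sym (P : A -> A -> R) : Prop := forall a b, P a b = - P b a.

Definition Lmax (P : A -> A -> R) : R :=
  \big[Num.max/0]_(a : A) \big[Num.max/0]_(b : A) `|P a b|.

Definition nash (P : A -> A -> R) (p : A -> R) : Prop :=
  in_simplex p /\ forall a, Pmul P p a <= 0.

Definition full_support (P : A -> A -> R) : Prop :=
  forall a, exists p, nash P p /\ 0 < p a.

(* KL divergence D_KL(p || q) = sum_a p_a ln (p_a / q_a)  (terms with p_a = 0 vanish) *)
Definition KL (p q : A -> R) : R := \sum_a p a * ln (p a / q a).

Definition mwu (eta : R) (q g : A -> R) (a : A) : R :=
  q a * expR (eta * g a) / \sum_b q b * expR (eta * g b).

(* omwu_state n = (hatpi^(n+1), pi^(n)) *)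
Fixpoint omwu_state (P : A -> A -> R) (eta : R) (h1 : A -> R) (n : nat)
  : (A -> R) * (A -> R) :=
  match n with
  | 0 => (h1, h1)
  | n'.+1 =>
      let (hat, prev) := omwu_state P eta h1 n' in
      let cur := mwu eta hat (Pmul P prev) in
      (mwu eta hat (Pmul P cur), cur)
  end.

(* hatpi t = \hat\pi^{(t)} for t >= 1 (index 0 unused) *)
Definition hatpi P eta h1 (t : nat) : A -> R := (omwu_state P eta h1 t.-1).1.
Definition pit P eta h1 (t : nat) : A -> R := (omwu_state P eta h1 t).2.

Definition Theta P eta h1 (pistar : A -> R) (t : nat) : R :=
  KL pistar (hatpi P eta h1 t)
  + 4 * eta ^+ 2 * Lmax P ^+ 2 * KL (hatpi P eta h1 t) (pit P eta h1 t.-1).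

Definition Kt P eta h1 (t : nat) : R :=
  \big[Num.max/0]_(a : A)
    (hatpi P eta h1 t a * `|eta * Pmul P (pit P eta h1 t.-1) a|).

(* \hat K^{(t+1)} = max_a hatpi^(t)_a |eta (P pi^(t))_a| ; argument is t+1 *)
Definition Khat P eta h1 (t1 : nat) : R :=
  \big[Num.max/0]_(a : A)
    (hatpi P eta h1 t1.-1 a * `|eta * Pmul P (pit P eta h1 t1.-1) a|).

End Defs.

From mathcomp Require Import all_boot all_order all_algebra.
From mathcomp Require Import all_classical all_reals all_analysis.
From mathcomp Require Import ring lra.
Import Order.TTheory GRing.Theory Num.Theory.
Local Open Scope ring_scope.

(* Write h = hatpi^(t), p0 = pi^(t-1), p = pi^(t), h' = hatpi^(t+1) and
   y = eta P p, so that p and h' are exponential tilts of h and h' is the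
   tilt of p by y - eta P p0.  Skew-symmetry gives <p, y> = 0 while a Nash
   equilibrium has <pistar, y> >= 0, so KL(pistar||.) drops at least as much
   as KL(p||.).  The symmetric divergence KL(p||h') + KL(h'||p) is a
   covariance under a tilt, hence at most (eta L |p - p0|_1)^2, and Pinsker's
   inequality bounds |p - p0|_1^2 by 4 (KL(p||h) + KL(h||p0)); together these
   give Theta_t - Theta_(t+1) >= (1 - 4 eta^2 L^2) (KL(h'||p) + KL(p||h)).
   Conversely, writing h'_a = h_a e^(y_a - ln Z), each h_a |y_a| and h'_a |y_a|
   is bounded by e^(2 eta L) |h'_a - h_a| + |ln Z|, and Pinsker bounds both
   terms by multiples of the square root of that same KL sum. *)

Section RealCalculus.
Context {R : realType}.
Implicit Types (f df : R -> R) (x : R).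

Lemma ger0_is_derive_le f df (a b : R) : a <= b ->
  (forall x, a <= x <= b -> is_derive x 1 f (df x)) ->
  (forall x, a < x < b -> 0 <= df x) -> f a <= f b.
Proof.
move=> ab fd df_ge0; case: (ltgtP a b) ab => // [altb|->] _; last by [].
have fd' x : x \in `]a, b[%R -> is_derive x 1 f (df x).
  by rewrite in_itv /= => /andP[/ltW ? /ltW ?]; apply: fd; apply/andP.
rewrite -subr_ge0; have [|c cab ->] := MVT altb fd'.
  apply: derivable_within_continuous => x; rewrite in_itv /= => xab.
  by have [] := fd x xab.
by rewrite mulr_ge0 ?subr_ge0 ?(ltW altb) // df_ge0 //; move: cab; rewrite in_itv.
Qed.

Lemma sign1_of_ger0_is_derive f df : f 1 = 0 ->
  (forall x, 0 < x -> is_derive x 1 f (df x)) ->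
  (forall x, 0 < x -> 0 <= df x) ->
  forall x, 0 < x -> 0 <= (x - 1) * f x.
Proof.
move=> f1 fd df_ge0 x x0; case: (lerP 1 x) => x1.
- have : f 1 <= f x.
    by apply: (@ger0_is_derive_le f df) => // y /andP[y1 _];
      [apply: fd | apply: df_ge0]; lra.
  by rewrite f1 => fx; rewrite mulr_ge0 // subr_ge0.
- have : f x <= f 1.
    by apply: (@ger0_is_derive_le f df) (ltW x1) _ _ => y /andP[xy _];
      [apply: fd | apply: df_ge0]; lra.
  by rewrite f1 => fx; rewrite mulr_le0 // subr_le0 ltW.
Qed.

Lemma ge0_of_sign1_is_derive f df : f 1 = 0 ->
  (forall x, 0 < x -> is_derive x 1 f (df x)) ->
  (forall x, 0 < x -> 0 <= (x - 1) * df x) ->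
  forall x, 0 < x -> 0 <= f x.
Proof.
move=> f1 fd dfs x x0; case: (lerP 1 x) => x1.
- rewrite -f1; apply: (@ger0_is_derive_le f df) => // y /andP[y1 _].
    by apply: fd; lra.
  by have := dfs y (lt_trans ltr01 y1); rewrite pmulr_rge0 // subr_gt0.
- have : - f x <= - f 1.
    apply: (@ger0_is_derive_le (fun y => - f y) (fun y => - df y)) (ltW x1) _ _.
      by move=> y /andP[xy _]; apply: is_deriveN; apply: fd; lra.
    move=> y /andP[xy y1]; have := dfs y (lt_trans x0 xy).
    by rewrite nmulr_rge0 ?subr_lt0 // oppr_ge0.
  by rewrite f1; lra.
Qed.

Lemma is_derive_sum_seq (T : Type) (s : seq T) (F : T -> R -> R) (dF : T -> R) x :
  (forall i, is_derive x 1 (F i) (dF i)) ->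
  is_derive x 1 (fun r => \sum_(i <- s) F i r) (\sum_(i <- s) dF i).
Proof.
move=> dF_; elim: s => [|i s IH].
  rewrite big_nil (_ : (fun r => _) = cst 0); first exact: is_derive_cst.
  by apply/funext => r; rewrite big_nil.
rewrite big_cons (_ : (fun r => _) = (fun r => F i r + \sum_(j <- s) F j r)).
  exact: is_deriveD.
by apply/funext => r; rewrite big_cons.
Qed.

Lemma ln_ge1BV x : 0 < x -> 1 - x^-1 <= ln x.
Proof.
move=> x0; have := expR_ge1Dx (ln x^-1).
by rewrite lnK ?posrE ?invr_gt0 // lnV ?posrE //; lra.
Qed.

Lemma pinsker_kernel_ge0 x : 0 < x ->
  3 * ((x - 1) * (x - 1)) <= (2 * x + 4) * (x * ln x - x + 1).
Proof.
move=> x0; rewrite -subr_ge0.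
pose g (y : R) : R := (y + 1) * ln y - 2 * (y - 1).
have g1 : g 1 = 0 by rewrite /g ln1; ring.
have dg (y : R) : 0 < y -> is_derive y 1 g (ln y + y^-1 - 1).
  move=> y0; have := is_derive1_ln y0 => ?; rewrite /g; apply: is_derive_eq.
  by rewrite /GRing.scale /=; field; rewrite gt_eqF.
have dg_ge0 (y : R) : 0 < y -> 0 <= ln y + y^-1 - 1 by move/ln_ge1BV; lra.
pose F (y : R) : R := (2 * y + 4) * (y * ln y - y + 1) - 3 * ((y - 1) * (y - 1)).
have F1 : F 1 = 0 by rewrite /F ln1; ring.
have dF (y : R) : 0 < y -> is_derive y 1 F (4 * g y).
  move=> y0; have := is_derive1_ln y0 => ?; rewrite /F; apply: is_derive_eq.
  by rewrite /GRing.scale /g /=; field; rewrite gt_eqF.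
apply: (@ge0_of_sign1_is_derive F (fun y => 4 * g y) F1 dF _ x x0) => y y0.
by rewrite mulrCA mulr_ge0 // (@sign1_of_ger0_is_derive g _ g1 dg dg_ge0 y y0).
Qed.

Lemma pinsker_pointwise (p q : R) : 0 < p -> 0 < q ->
  3 * (p - q) ^+ 2 <= 2 * (p + 2 * q) * (p * ln (p / q) - p + q).
Proof.
move=> p0 q0; have qn0 : q != 0 by rewrite gt_eqF.
have := @pinsker_kernel_ge0 (p / q) (divr_gt0 p0 q0).
have -> : 3 * (p - q) ^+ 2 = q ^+ 2 * (3 * ((p / q - 1) * (p / q - 1))) by field.
have -> : 2 * (p + 2 * q) * (p * ln (p / q) - p + q) =
    q ^+ 2 * ((2 * (p / q) + 4) * (p / q * ln (p / q) - p / q + 1)) by field.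
by apply: ler_wpM2l; rewrite sqr_ge0.
Qed.

Lemma expR_dist1_bounds (c z : R) : `|z| <= c ->
  `|z| <= expR c * `|expR z - 1| /\ expR z * `|z| <= expR c * `|expR z - 1|.
Proof.
move=> zc; have ec1 : 1 <= expR c by rewrite -expR0 ler_expR (le_trans _ zc).
have ez_gt0 := expR_gt0 z.
have [z0|z0] := lerP 0 z.
- have ez1 : z <= expR z - 1 by have := expR_ge1Dx z; lra.
  have ezc : expR z <= expR c by rewrite ler_expR (le_trans (ler_norm z)).
  have ez_ge1 : 1 <= expR z by rewrite -expR0 ler_expR.
  rewrite !ger0_norm ?subr_ge0 //.
  have : 0 <= (expR c - 1) * (expR z - 1) by rewrite mulr_ge0 ?subr_ge0 //; lra.
  have : 0 <= expR z * (expR z - 1 - z) by rewrite mulr_ge0 ?subr_ge0 // ltW.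
  have : 0 <= (expR c - expR z) * (expR z - 1) by rewrite mulr_ge0 ?subr_ge0 //; lra.
  by split; nra.
- have e1 : expR z * expR (- z) = 1 by rewrite -expRD subrr expR0.
  have ez1 : - z * expR z <= 1 - expR z.
    by have := ler_wpM2l (ltW ez_gt0) (expR_ge1Dx (- z)); rewrite e1; lra.
  have ezc : expR (- z) <= expR c.
    by rewrite ler_expR (le_trans _ zc) // ltr0_norm.
  have ez_lt1 : expR z < 1 by rewrite expR_lt1.
  rewrite !ltr0_norm ?subr_lt0 //; split; last by nra.
  have := ler_wpM2l (ltW (expR_gt0 (- z))) ez1.
  rewrite mulrCA [expR (- z) * _]mulrC e1 mulr1.
  have : 0 <= (expR c - expR (- z)) * (1 - expR z) by rewrite mulr_ge0 ?subr_ge0 // ltW.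
  nra.
Qed.

Lemma le_sqrt_of_sqr_le x (y : R) : x ^+ 2 <= y -> x <= Num.sqrt y.
Proof.
by move=> xy; rewrite (le_trans (ler_norm x)) // -sqrtr_sqr ler_wsqrtr.
Qed.

End RealCalculus.

Section FiniteSums.
Context {R : realType} {A : finType}.
Implicit Types (d g u v : A -> R).

Lemma ler_term_sum (F : A -> R) a : (forall b, 0 <= F b) -> F a <= \sum_b F b.
Proof. by move=> F_ge0; rewrite (bigD1 a) //= lerDl sumr_ge0. Qed.

Lemma simplex_le1 u a : in_simplex u -> u a <= 1.
Proof. by move=> [u_ge0 <-]; apply: ler_term_sum. Qed.

Lemma norm_sum_mul_le d g (M : R) : (forall a, `|g a| <= M) ->
  `|\sum_a d a * g a| <= M * \sum_a `|d a|.
Proof.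
move=> gM; apply: le_trans (ler_norm_sum _ _ _) _.
rewrite mulr_sumr; apply: ler_sum => a _.
by rewrite normrM mulrC ler_wpM2r.
Qed.

Lemma simplex_mean_le u g (M : R) : in_simplex u -> (forall a, `|g a| <= M) ->
  `|\sum_a u a * g a| <= M.
Proof.
move=> [u_ge0 u1] gM; apply: le_trans (norm_sum_mul_le u g M gM) _.
by rewrite (eq_bigr _ (fun a _ => ger0_norm (u_ge0 a))) u1 mulr1.
Qed.

Lemma cauchy_schwarz_engel u v : (forall a, 0 < v a) ->
  (\sum_a u a) ^+ 2 <= (\sum_a v a) * (\sum_a u a ^+ 2 / v a).
Proof.
move=> v_gt0.
pose d a b := v b * (u a ^+ 2 / v a) + v a * (u b ^+ 2 / v b) - 2 * (u a * u b).
have d_ge0 : 0 <= \sum_a \sum_b d a b.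
  apply: sumr_ge0 => a _; apply: sumr_ge0 => b _.
  have va := v_gt0 a; have vb := v_gt0 b.
  have -> : d a b = v a * v b * (u a / v a - u b / v b) ^+ 2.
    by rewrite /d; field; rewrite !gt_eqF.
  by rewrite mulr_ge0 ?sqr_ge0 // mulr_ge0 // ltW.
suff : \sum_a \sum_b d a b =
    2 * ((\sum_a v a) * (\sum_a u a ^+ 2 / v a)) - 2 * (\sum_a u a) ^+ 2 by lra.
rewrite /d; under eq_bigr do rewrite sumrB big_split /= -mulr_suml -!mulr_sumr.
by rewrite sumrB big_split /= -mulr_sumr -mulr_suml -mulr_sumr -mulr_suml expr2; ring.
Qed.

End FiniteSums.

Section Pinsker.
Context {R : realType} {A : finType}.
Implicit Types (p q r : A -> R).

Lemma pinsker p q : positive_dist p -> positive_dist q ->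
  (\sum_a `|p a - q a|) ^+ 2 <= 2 * KL p q.
Proof.
move=> [[_ p1] p_gt0] [[_ q1] q_gt0].
have w_gt0 a : 0 < p a + 2 * q a by have := p_gt0 a; have := q_gt0 a; lra.
apply: le_trans (@cauchy_schwarz_engel _ _ (fun a => `|p a - q a|)
  (fun a => p a + 2 * q a) w_gt0) _.
rewrite big_split /= -mulr_sumr p1 q1.
have -> : 2 * KL p q = \sum_a 2 * (p a * ln (p a / q a) - p a + q a).
  by rewrite -mulr_sumr /KL !big_split /= sumrN p1 q1; ring.
rewrite mulr_sumr; apply: ler_sum => a _.
rewrite real_normK ?num_real // mulrA ler_pdivrMr // mulrAC.
by have := pinsker_pointwise (p a) (q a) (p_gt0 a) (q_gt0 a); lra.
Qed.

Lemma KL_ge0 p q : positive_dist p -> positive_dist q -> 0 <= KL p q.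
Proof.
by move=> hp hq; have := pinsker p q hp hq; have := sqr_ge0 (\sum_a `|p a - q a|); lra.
Qed.

Lemma pinsker_sqrt p q : positive_dist p -> positive_dist q ->
  \sum_a `|p a - q a| <= Num.sqrt 2 * Num.sqrt (KL p q).
Proof. by move=> hp hq; rewrite -sqrtrM //; exact/le_sqrt_of_sqr_le/pinsker. Qed.

Lemma pinsker2 p q r : positive_dist p -> positive_dist q -> positive_dist r ->
  (\sum_a `|p a - r a|) ^+ 2 <= 4 * (KL p q + KL q r).
Proof.
move=> hp hq hr.
have tri : \sum_a `|p a - r a| <= \sum_a `|p a - q a| + \sum_a `|q a - r a|.
  rewrite -big_split; apply: ler_sum => a _.
  by rewrite (_ : p a - r a = (p a - q a) + (q a - r a)) ?ler_normD //; ring.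
have := pinsker p q hp hq; have := pinsker q r hq hr.
move: tri; set d := \sum_a _; set b := \sum_a _; set c := \sum_a _ => tri pc pb.
have d0 : 0 <= d by apply: sumr_ge0.
have : d ^+ 2 <= (b + c) ^+ 2 by rewrite lerXn2r // ?nnegrE // addr_ge0 ?sumr_ge0.
by have := sqr_ge0 (b - c); nra.
Qed.

Lemma pinsker2_sqrt p q r : positive_dist p -> positive_dist q -> positive_dist r ->
  \sum_a `|p a - r a| <= 2 * Num.sqrt (KL p q + KL q r).
Proof.
move=> hp hq hr; have -> : 2 = Num.sqrt 4 :> R.
  by rewrite (_ : 4 = 2 ^+ 2) ?sqrtr_sqr ?ger0_norm //; ring.
by rewrite -sqrtrM //; exact/le_sqrt_of_sqr_le/pinsker2.
Qed.

End Pinsker.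

Section Tilt.
Context {R : realType} {A : finType}.
Implicit Types (q u w y z : A -> R).

Definition tiltZ q y : R := \sum_a q a * expR (y a).

Definition tilt q y (a : A) : R := q a * expR (y a) / tiltZ q y.

Lemma mwuE (eta : R) q g : mwu eta q g = tilt q (fun a => eta * g a).
Proof. by []. Qed.

Lemma tiltZ_gt0 q y : positive_dist q -> 0 < tiltZ q y.
Proof.
move=> [[_ q1] q_gt0]; case: (pickP [pred _ : A | true]) => [a0 _|none].
  rewrite /tiltZ (bigD1 a0) //= ltr_pwDl ?mulr_gt0 ?expR_gt0 //.
  by apply: sumr_ge0 => a _; rewrite mulr_ge0 ?expR_ge0 ?ltW.
by move: q1; rewrite big_pred0 // => /eqP; rewrite eq_sym oner_eq0.
Qed.

Lemma tilt_pos q y : positive_dist q -> positive_dist (tilt q y).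
Proof.
move=> hq; have Z_gt0 := tiltZ_gt0 q y hq; have [_ q_gt0] := hq.
have tilt_gt0 a : 0 < tilt q y a by rewrite divr_gt0 ?mulr_gt0 ?expR_gt0.
split=> //; split=> [a|]; first exact: ltW.
by rewrite /tilt -mulr_suml divff // gt_eqF.
Qed.

Lemma tiltD q y z : positive_dist q ->
  tilt (tilt q y) z = tilt q (fun a => y a + z a).
Proof.
move=> hq; apply/funext => a.
have Zy := tiltZ_gt0 q y hq; have Zyz := tiltZ_gt0 q (fun a => y a + z a) hq.
have e : tiltZ (tilt q y) z = tiltZ q (fun a => y a + z a) / tiltZ q y.
  by rewrite /tiltZ mulr_suml; apply: eq_bigr => b _; rewrite /tilt expRD; ring.
by rewrite {1}/tilt e /tilt expRD; field; rewrite !gt_eqF.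
Qed.

Lemma tiltE q y a : positive_dist q ->
  tilt q y a = q a * expR (y a - ln (tiltZ q y)).
Proof. by move=> hq; rewrite expRD expRN lnK ?posrE ?tiltZ_gt0 // mulrA. Qed.

Lemma KLxx q : positive_dist q -> KL q q = 0.
Proof.
by move=> [_ q_gt0]; rewrite /KL big1 // => a _; rewrite divff ?gt_eqF // ln1 mulr0.
Qed.

Lemma KL_tilt u q y : in_simplex u -> positive_dist q ->
  KL u q - KL u (tilt q y) = \sum_a u a * y a - ln (tiltZ q y).
Proof.
move=> [u_ge0 u1] hq; have Z_gt0 := tiltZ_gt0 q y hq; have [_ q_gt0] := hq.
rewrite /KL -sumrB -[ln _]mul1r -u1 mulr_suml -sumrB; apply: eq_bigr => a _.
have [->|ua_neq0] := eqVneq (u a) 0; first by rewrite !mul0r subrr.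
have ua_gt0 : 0 < u a by rewrite lt_def ua_neq0 u_ge0.
have qa_gt0 := q_gt0 a.
rewrite /tilt !ln_div ?posrE ?divr_gt0 ?mulr_gt0 ?expR_gt0 //.
by rewrite lnM ?posrE ?expR_gt0 // expRK; ring.
Qed.

Lemma KL_tilt_sym q y : positive_dist q ->
  KL q (tilt q y) + KL (tilt q y) q = \sum_a (tilt q y a - q a) * y a.
Proof.
move=> hq; have hq' := tilt_pos q y hq.
have := KL_tilt q q y hq.1 hq; have := KL_tilt (tilt q y) q y hq'.1 hq.
rewrite !KLxx // => e1 e2.
have -> : \sum_a (tilt q y a - q a) * y a =
    \sum_a tilt q y a * y a - \sum_a q a * y a.
  by rewrite -sumrB; apply: eq_bigr => a _; ring.
lra.
Qed.

Lemma ln_tiltZ_bounds q y : positive_dist q ->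
  \sum_a q a * y a <= ln (tiltZ q y) <= \sum_a tilt q y a * y a.
Proof.
move=> hq; have hq' := tilt_pos q y hq.
have := KL_tilt q q y hq.1 hq; have := KL_tilt (tilt q y) q y hq'.1 hq.
rewrite !KLxx // => e1 e2.
have := KL_ge0 q (tilt q y) hq hq'; have := KL_ge0 (tilt q y) q hq' hq.
by move=> k1 k2; apply/andP; split; lra.
Qed.

Lemma abs_ln_tiltZ_le q y (M : R) : positive_dist q -> (forall a, `|y a| <= M) ->
  `|ln (tiltZ q y)| <= M.
Proof.
move=> hq yM; have /andP[lo up] := ln_tiltZ_bounds q y hq.
have /ler_normlP[+ _] := simplex_mean_le q y M hq.1 yM.
have /ler_normlP[_ +] := simplex_mean_le (tilt q y) y M (tilt_pos q y hq).1 yM.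
by move=> ? ?; apply/ler_normlP; split; lra.
Qed.

(* The mean of w under the tilt by s w has derivative Var_s(w) <= M^2 in s. *)
Lemma tilt_cov_le q w (M : R) : positive_dist q ->
  (forall a, `|w a| <= M) -> \sum_a (tilt q w a - q a) * w a <= M ^+ 2.
Proof.
move=> hq wM; have [[_ q1] q_gt0] := hq.
pose D (s : R) := tiltZ q (fun a => s * w a).
pose N (s : R) := \sum_a q a * w a * expR (s * w a).
pose N2 (s : R) := \sum_a q a * w a ^+ 2 * expR (s * w a).
have D_gt0 (s : R) : 0 < D s by apply: tiltZ_gt0.
have dD (s : R) : is_derive s 1 D (N s).
  rewrite /D /tiltZ; apply: is_derive_sum_seq => a.
  by apply: is_derive_eq; rewrite /GRing.scale /=; ring.
have dN (s : R) : is_derive s 1 N (N2 s).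
  rewrite /N; apply: is_derive_sum_seq => a.
  by apply: is_derive_eq; rewrite /GRing.scale /=; ring.
have dm (s : R) : is_derive s 1 (fun r => r * M ^+ 2 - N r / D r)
    (M ^+ 2 - (N2 s / D s - (N s / D s) ^+ 2)).
  have := is_deriveV (lt0r_neq0 (D_gt0 s)) (dD s) => ?; have := dN s => ?.
  by apply: is_derive_eq; rewrite /GRing.scale /=; field; rewrite gt_eqF.
have N2_le (s : R) : N2 s / D s <= M ^+ 2.
  rewrite ler_pdivrMr // /N2 /D /tiltZ mulr_sumr; apply: ler_sum => a _.
  rewrite (_ : _ * _ * _ = w a ^+ 2 * (q a * expR (s * w a))); last by ring.
  apply: ler_wpM2r; first by rewrite mulr_ge0 ?expR_ge0 ?ltW.
  rewrite -real_normK ?num_real //; have := wM a; have := normr_ge0 (w a); nra.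
have : 0 * M ^+ 2 - N 0 / D 0 <= 1 * M ^+ 2 - N 1 / D 1.
  apply: (@ger0_is_derive_le R _ _ 0 1 ler01 (fun s _ => dm s)) => s _.
  by have := N2_le s; have := sqr_ge0 (N s / D s); lra.
have -> : D 0 = 1.
  by rewrite -q1 /D /tiltZ; apply: eq_bigr => a _; rewrite mul0r expR0 mulr1.
have -> : N 0 = \sum_a q a * w a.
  by apply: eq_bigr => a _; rewrite mul0r expR0 mulr1.
have -> : N 1 / D 1 = \sum_a tilt q w a * w a.
  rewrite /D (_ : (fun a => 1 * w a) = w); last by apply/funext => a; rewrite mul1r.
  by rewrite /N mulr_suml; apply: eq_bigr => a _; rewrite /tilt mul1r; ring.
suff -> : \sum_a (tilt q w a - q a) * w a =
    \sum_a tilt q w a * w a - \sum_a q a * w a by rewrite divr1; lra.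
by rewrite -sumrB; apply: eq_bigr => a _; ring.
Qed.

Lemma tilt_weight_abs_le q y (c : R) a : positive_dist q ->
  (forall a, `|y a| <= c) ->
  Num.max (q a * `|y a|) (tilt q y a * `|y a|)
  <= expR (2 * c) * `|tilt q y a - q a| + `|ln (tiltZ q y)|.
Proof.
move=> hq yc; set Z := tiltZ q y.
have lnZc : `|ln Z| <= c := abs_ln_tiltZ_le q y c hq yc.
set z := y a - ln Z.
have zc : `|z| <= 2 * c by apply: le_trans (ler_normB _ _) _; have := yc a; lra.
have [zle ezle] := expR_dist1_bounds _ _ zc.
have qa_gt0 := hq.2 a; have ta_gt0 := (tilt_pos q y hq).2 a.
have Ea : tilt q y a = q a * expR z by rewrite tiltE.
have Dist : `|tilt q y a - q a| = q a * `|expR z - 1|.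
  by rewrite Ea -[X in _ - X]mulr1 -mulrBr normrM gtr0_norm.
have yz : `|y a| <= `|z| + `|ln Z|.
  by rewrite (_ : y a = z + ln Z) ?ler_normD // /z; ring.
have qa1 := simplex_le1 q a hq.1.
have ta1 := simplex_le1 (tilt q y) a (tilt_pos q y hq).1.
have lnZ_ge0 := normr_ge0 (ln Z).
rewrite Dist ge_max; apply/andP; split.
- have : q a * `|z| <= q a * (expR (2 * c) * `|expR z - 1|) by rewrite ler_pM2l.
  by have := ler_wpM2l (ltW qa_gt0) yz; nra.
- have : q a * (expR z * `|z|) <= q a * (expR (2 * c) * `|expR z - 1|).
    by rewrite ler_pM2l.
  by have := ler_wpM2l (ltW ta_gt0) yz; rewrite Ea; nra.
Qed.

End Tilt.

Section Game.
Context {R : realType} {A : finType}.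
Variable P : A -> A -> R.
Implicit Types (p q : A -> R).

Lemma Lmax_ge a b : `|P a b| <= Lmax P.
Proof.
exact: le_trans (le_bigmax _ (fun b => `|P a b|) b)
  (le_bigmax _ (fun a => \big[Num.max/0]_b `|P a b|) a).
Qed.

Lemma Lmax_ge0 : 0 <= Lmax P.
Proof. exact: bigmax_ge_id. Qed.

Lemma Pmul_bound q a : in_simplex q -> `|Pmul P q a| <= Lmax P.
Proof.
move=> hq; rewrite /Pmul; under eq_bigr do rewrite mulrC.
by apply: simplex_mean_le hq _ => b; apply: Lmax_ge.
Qed.

Lemma Pmul_lipschitz p q a :
  `|Pmul P p a - Pmul P q a| <= Lmax P * \sum_b `|p b - q b|.
Proof.
rewrite /Pmul -sumrB; under eq_bigr do rewrite -mulrBr mulrC.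
by apply: norm_sum_mul_le => b; apply: Lmax_ge.
Qed.

Hypothesis skP : skew_sym P.

Lemma sum_Pmul_swap p q : \sum_a p a * Pmul P q a = - \sum_a q a * Pmul P p a.
Proof.
rewrite /Pmul; under eq_bigr do rewrite mulr_sumr.
rewrite exchange_big -sumrN; apply: eq_bigr => b _.
rewrite mulr_sumr -sumrN; apply: eq_bigr => a _.
by rewrite (skP a b); ring.
Qed.

Lemma sum_Pmul_self q : \sum_a q a * Pmul P q a = 0.
Proof. by have := sum_Pmul_swap q q; lra. Qed.

Lemma nash_sum_Pmul_ge0 p q : nash P p -> (forall a, 0 <= q a) ->
  0 <= \sum_a p a * Pmul P q a.
Proof.
move=> [_ p_eq] q_ge0; rewrite sum_Pmul_swap oppr_ge0.
by apply: sumr_le0 => b _; rewrite mulr_ge0_le0.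
Qed.

End Game.

Section OMWUStep.
Context {R : realType} {A : finType}.
Variables (P : A -> A -> R) (eta : R) (h p0 : A -> R).
Hypotheses (skP : skew_sym P) (eta_gt0 : 0 < eta).
Hypotheses (hh : positive_dist h) (hp0 : positive_dist p0).

Let L := Lmax P.
Let p := mwu eta h (Pmul P p0).
Let h' := mwu eta h (Pmul P p).
Let y a := eta * Pmul P p a.

Let Eh' : h' = tilt h y. Proof. exact: mwuE. Qed.
Let hp : positive_dist p. Proof. exact: tilt_pos. Qed.
Let hh' : positive_dist h'. Proof. exact: tilt_pos. Qed.
Let c_ge0 : 0 <= eta * L. Proof. exact: mulr_ge0 (ltW eta_gt0) (Lmax_ge0 P). Qed.

Let y_bound a : `|y a| <= eta * L.
Proof. by rewrite /y normrM gtr0_norm // ler_pM2l //; apply: Pmul_bound; case: hp. Qed.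

Let sum_p_y : \sum_a p a * y a = 0.
Proof.
by under eq_bigr do rewrite mulrCA; rewrite -mulr_sumr sum_Pmul_self // mulr0.
Qed.

Lemma KL_nash_gain ps : nash P ps -> KL p h - KL p h' <= KL ps h - KL ps h'.
Proof.
move=> hps; rewrite Eh' (KL_tilt p h y hp.1 hh) (KL_tilt ps h y hps.1 hh) sum_p_y.
suff : 0 <= \sum_a ps a * y a by lra.
under eq_bigr do rewrite mulrCA.
rewrite -mulr_sumr mulr_ge0 ?(ltW eta_gt0) //.
by apply: nash_sum_Pmul_ge0 => // a; apply: ltW; apply: hp.2.
Qed.

Lemma KL_step_sym_le : KL p h' + KL h' p <= (eta * L * \sum_a `|p a - p0 a|) ^+ 2.
Proof.
have -> : h' = tilt p (fun a => y a - eta * Pmul P p0 a).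
  by rewrite Eh' /p mwuE tiltD //; congr tilt; apply/funext => a; rewrite /y; ring.
rewrite KL_tilt_sym //; apply: tilt_cov_le hp _ => a.
by rewrite /y -mulrBr normrM gtr0_norm // -mulrA ler_pM2l //; apply: Pmul_lipschitz.
Qed.

Lemma omwu_decrease ps : nash P ps ->
  (1 - 4 * eta ^+ 2 * L ^+ 2) * (KL h' p + KL p h)
  <= (KL ps h + 4 * eta ^+ 2 * L ^+ 2 * KL h p0)
     - (KL ps h' + 4 * eta ^+ 2 * L ^+ 2 * KL h' p).
Proof.
move=> hps; have gain := KL_nash_gain ps hps.
have := KL_step_sym_le; rewrite exprMn.
have := ler_wpM2l (sqr_ge0 (eta * L)) (pinsker2 p h p0 hp hh hp0).
by rewrite exprMn; lra.
Qed.

(* ln Z lies between <h, y> and <h', y>, which <p, y> = 0 turns into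
   differences controlled by |h - p|_1 and |h' - p|_1. *)
Lemma abs_ln_tiltZ_step :
  `|ln (tiltZ h y)| <= eta * L * Num.max (\sum_a `|h' a - p a|) (\sum_a `|p a - h a|).
Proof.
have /andP[lo up] := ln_tiltZ_bounds h y hh; rewrite -Eh' in up.
have centered q : \sum_a q a * y a = \sum_a (q a - p a) * y a.
  by under [RHS]eq_bigr do rewrite mulrBl; rewrite sumrB sum_p_y subr0.
have /ler_normlP[+ _] := norm_sum_mul_le (fun a => h a - p a) y _ y_bound.
have /ler_normlP[_ +] := norm_sum_mul_le (fun a => h' a - p a) y _ y_bound.
under [\sum_a `|h a - p a|]eq_bigr do rewrite distrC.
rewrite -!centered => hi lo'.
set m := Num.max _ _.
have m1 : \sum_a `|h' a - p a| <= m by rewrite le_max lexx.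
have m2 : \sum_a `|p a - h a| <= m by rewrite le_max lexx orbT.
have := ler_wpM2l c_ge0 m1; have := ler_wpM2l c_ge0 m2.
by move=> ? ?; apply/ler_normlP; split; lra.
Qed.

Lemma omwu_K_le :
  Num.max (\big[Num.max/0]_a (h a * `|eta * Pmul P p a|))
          (\big[Num.max/0]_a (h' a * `|eta * Pmul P p a|)) ^+ 2
  <= (Num.sqrt 2 * eta * L + 2 * expR (2 * eta * L)) ^+ 2 * (KL h' p + KL p h).
Proof.
have KLh'p_ge0 := KL_ge0 h' p hh' hp; have KLph_ge0 := KL_ge0 p h hp hh.
set s := Num.sqrt (KL h' p + KL p h); have s_ge0 : 0 <= s := sqrtr_ge0 _.
have l1_le (q r : A -> R) : positive_dist q -> positive_dist r ->
    KL q r <= KL h' p + KL p h -> \sum_a `|q a - r a| <= Num.sqrt 2 * s.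
  move=> hq hr KL_le; apply: le_trans (pinsker_sqrt q r hq hr) _.
  by rewrite ler_wpM2l ?sqrtr_ge0 ?ler_wsqrtr.
have lnZ : `|ln (tiltZ h y)| <= eta * L * (Num.sqrt 2 * s).
  apply: le_trans abs_ln_tiltZ_step _; rewrite ler_wpM2l // ge_max.
  by rewrite !l1_le //; lra.
set den := Num.sqrt 2 * eta * L + 2 * expR (2 * eta * L).
have bound a : Num.max (h a * `|y a|) (h' a * `|y a|) <= den * s.
  rewrite Eh'; apply: le_trans (tilt_weight_abs_le h y (eta * L) a hh y_bound) _.
  rewrite -Eh' /den -(mulrA 2) -(mulrA (Num.sqrt 2)).
  have := ler_term_sum (fun a => `|h' a - h a|) a (fun _ => normr_ge0 _).
  move/le_trans/(_ (pinsker2_sqrt h' p h hh' hp hh)); rewrite -/s => dist_h'h.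
  by have := ler_wpM2l (expR_ge0 (2 * (eta * L))) dist_h'h; nra.
have den_ge0 : 0 <= den.
  by rewrite /den -mulrA; apply: addr_ge0; rewrite mulr_ge0 ?sqrtr_ge0 ?expR_ge0.
rewrite -[KL h' p + KL p h]sqr_sqrtr ?addr_ge0 // -exprMn ler_sqr ?nnegrE ?mulr_ge0 //.
  rewrite ge_max; apply/andP; split; apply: bigmax_le => [|a _]; rewrite ?mulr_ge0 //;
  by have := bound a; rewrite ge_max => /andP[].
by rewrite le_max bigmax_ge_id.
Qed.

End OMWUStep.

Lemma omwu_state_pos {R : realType} {A : finType} (P : A -> A -> R) (eta : R)
    (h1 : A -> R) n : positive_dist h1 ->
  positive_dist (omwu_state P eta h1 n).1 /\ positive_dist (omwu_state P eta h1 n).2.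
Proof.
move=> h1_pos; elim: n => [//|n] /=.
by case: (omwu_state P eta h1 n) => hat prev /= [hat_pos _]; split; apply: tilt_pos.
Qed.

Theorem mainTheorem16 (R : realType) (A : finType) (P : A -> A -> R)
  (eta : R) (h1 pistar : A -> R) :
  skew_sym P ->
  full_support P ->
  0 < eta ->
  eta * Lmax P < 1 / 2 ->
  positive_dist h1 ->
  (* pistar = p(hatpi^(1)) : a KL-projection of hatpi^(1) onto the Nash set *)
  nash P pistar ->
  (forall p, nash P p -> KL pistar h1 <= KL p h1) ->
  forall t : nat, (1 <= t)%N ->
    Theta P eta h1 pistar t - Theta P eta h1 pistar t.+1 >=
      (1 - 4 * eta ^+ 2 * Lmax P ^+ 2)
        / (Num.sqrt 2 * eta * Lmax P + 2 * expR (2 * eta * Lmax P)) ^+ 2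
      * Num.max (Khat P eta h1 t.+1) (Kt P eta h1 t.+1) ^+ 2.
Proof.
move=> skP _ eta_gt0 etaL h1_pos pistar_nash _ [//|n] _.
rewrite /Theta /Kt /Khat /hatpi /pit /=.
case: (omwu_state P eta h1 n) (omwu_state_pos P eta h1 n h1_pos) => h p0 /= [hh hp0].
apply: le_trans (omwu_decrease P eta h p0 skP eta_gt0 hh hp0 pistar pistar_nash).
have c_ge0 := mulr_ge0 (ltW eta_gt0) (Lmax_ge0 P).
have C_ge0 : 0 <= 1 - 4 * eta ^+ 2 * Lmax P ^+ 2.
  by rewrite -mulrA -exprMn subr_ge0; move: etaL; nra.
have den_gt0 : 0 < Num.sqrt 2 * eta * Lmax P + 2 * expR (2 * eta * Lmax P).
  by rewrite ltr_wpDl ?mulr_gt0 ?expR_gt0 // -mulrA mulr_ge0 ?sqrtr_ge0.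
apply: le_trans (ler_wpM2l _ (omwu_K_le P eta h p0 skP eta_gt0 hh)) _.
  by rewrite divr_ge0 ?sqr_ge0.
by rewrite mulrA divfK ?sqrf_eq0 ?gt_eqF.
Qed.
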